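(* Let $R$ be a left PBW ring over the skew field $\mathbb D$ in $x_1,\dots,x_n$ with respect to an admissible ordering $\preceq$. Then the standard monomials $\{\mathbf x^{\alpha}:\alpha\in\mathbb N^n\}$ also form a basis of $R$ as a right $\mathbb D$-vector space (i.e. $R$ is a PBW ring) if and only if for each $i=1,\dots,n$ the map $(-)^{\epsilon_i}:\mathbb D\to\mathbb D$ is an automorphism of $\mathbb D$.
   Context: Let $R$ be a ring containing a skew field $\mathbb D$ and elements $x_1,\dots,x_n$; write $\mathbf x^\alpha=x_1^{\alpha_1}\cdots x_n^{\alpha_n}$ for $\alpha\in\mathbb N^n$. $R$ is left polynomial over $\mathbb D$ in $x_1,\dots,x_n$ if $\{\mathbf x^\alpha\}$ is a basis of $R$ as a left $\mathbb D$-vector space, so each $f$ has a unique standard representation $f=\sum c_\alpha\mathbf x^\alpha$; $\mathcal N(f)=\{\alpha:c_\alpha\ne0\}$. A total order $\preceq$ on $\mathbb N^n$ is admissible if $0\preceq\alpha$ for all $\alpha$ and $\alpha\preceq\beta\Rightarrow\alpha+\gamma\preceq\beta+\gamma$. $\exp(f)=\max_\preceq\mathcal N(f)$ for $f\ne0$, $\exp(0)=-\infty$. $R$ is a left PBW ring with respect to $\preceq$ if it is left polynomial and $\exp(fg)=\exp(f)+\exp(g)$ for all $f,g\in R$. $\epsilon_i\in\mathbb N^n$ is the $i$-th unit vector. In a left PBW ring, for $0\ne a\in\mathbb D$, $a^{\epsilon_i}$ denotes the (nonzero) coefficient of $\mathbf x^{\epsilon_i}=x_i$ in the standard representation of $x_ia$,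 so $x_ia=a^{\epsilon_i}x_i+p$ with $\exp(p)\prec\epsilon_i$; set $0^{\epsilon_i}=0$. The map $a\mapsto a^{\epsilon_i}$ is a ring endomorphism of $\mathbb D$. *)

From HB Require Import structures.
From mathcomp Require Import all_boot all_order all_algebra.
Set Implicit Arguments. Unset Strict Implicit. Unset Printing Implicit Defensive.
Import GRing.Theory.
Local Open Scope ring_scope.

Definition mexp (n : nat) := {ffun 'I_n -> nat}.
Definition madd (n : nat) (a b : mexp n) : mexp n := [ffun i => (a i + b i)%N].
Definition mzero (n : nat) : mexp n := [ffun => 0%N].
Definition eps (n : nat) (i : 'I_n) : mexp n := [ffun j => nat_of_bool (j == i)].

Definition monom (R : nzRingType) (n : nat) (x : 'I_n -> R) (a : mexp n) : R :=
  \prod_(i < n) x i ^+ a i.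

Definition admissible (n : nat) (le : rel (mexp n)) : Prop :=
  reflexive le /\ antisymmetric le /\ transitive le /\ total le /\
  (forall a, le (mzero n) a) /\
  (forall a b c, le a b -> le (madd a c) (madd b c)).

Section Poly.
Variables (D : unitRingType) (R : nzRingType) (iota : {rmorphism D -> R}).
Variables (n : nat) (x : 'I_n -> R).

Definition left_polynomial : Prop :=
  (forall f : R, exists (s : seq (mexp n)) (c : mexp n -> D),
      f = \sum_(a <- s) iota (c a) * monom x a) /\
  (forall (s : seq (mexp n)) (c : mexp n -> D), uniq s ->
      \sum_(a <- s) iota (c a) * monom x a = 0 -> forall a, a \in s -> c a = 0).

Definition right_polynomial : Prop :=
  (forall f : R, exists (s : seq (mexp n)) (c : mexp n -> D),
      f = \sum_(a <- s) monom x a * iota (c a)) /\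
  (forall (s : seq (mexp n)) (c : mexp n -> D), uniq s ->
      \sum_(a <- s) monom x a * iota (c a) = 0 -> forall a, a \in s -> c a = 0).

Definition std_left (f : R) (s : seq (mexp n)) (c : mexp n -> D) : Prop :=
  [/\ uniq s, (forall a, a \in s -> c a != 0) &
      f = \sum_(a <- s) iota (c a) * monom x a].

Definition is_exp (le : rel (mexp n)) (f : R) (e : mexp n) : Prop :=
  exists s c, [/\ std_left f s c, e \in s & forall a, a \in s -> le a e].

Definition lcoef (f : R) (e : mexp n) (d : D) : Prop :=
  exists s c, std_left f s c /\
    ((e \in s /\ c e = d) \/ (e \notin s /\ d = 0)).

(* left PBW ring: left polynomial and exp(fg) = exp(f) + exp(g)
   (for f = 0 or g = 0 both sides are -infinity, so only nonzero f, g matter) *)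
Definition left_PBW (le : rel (mexp n)) : Prop :=
  left_polynomial /\
  (forall f g ef eg, is_exp le f ef -> is_exp le g eg -> is_exp le (f * g) (madd ef eg)).

End Poly.

From Stdlib Require Import ClassicalEpsilon Classical.
From HB Require Import structures.
From mathcomp Require Import all_boot all_order all_algebra.
Set Implicit Arguments. Unset Strict Implicit. Unset Printing Implicit Defensive.
Import GRing.Theory.
Local Open Scope ring_scope.

(* Since the standard representation is unique, each f in R has coordinates
   lcoord f a in D, which are additive and left D-linear; exp(f) is the largest
   exponent with a nonzero coordinate.  The twist sigma_j(c) is the coordinate
   of x_j c at eps_j, so x_j c = sigma_j(c) x_j + (terms below eps_j); from
   exp(fg) = exp(f) + exp(g) one gets that sigma_j is an injective ring
   endomorphism of D.

   - The x^a are always right linearly independent: a nontrivial right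
     combination has as exponent its largest monomial, so it is nonzero.
   - (=>) Expanding d x_j in the right basis and comparing exponents shows
     d = sigma_j(c) for some c, so every sigma_j is onto.
   - (<=) If all sigma_j are onto, so is the top coefficient map
     c |-> coordinate of x^e c at e (induction on e, adding variables in
     increasing order).  Any f is then a right combination of the x^a by
     subtracting right terms; the recursion terminates because an admissible
     order is a well-order, by Dickson's lemma. *)

Section Exponents.
Variable n : nat.
Implicit Types (a b c e : mexp n) (j : 'I_n).

Lemma maddC a b : madd a b = madd b a.
Proof. by apply/ffunP => i; rewrite !ffunE addnC. Qed.

Lemma madd0 a : madd a (mzero n) = a.
Proof. by apply/ffunP => i; rewrite !ffunE addn0. Qed.

Lemma add0m a : madd (mzero n) a = a.
Proof. by rewrite maddC madd0. Qed.

Lemma maddI c a b : madd a c = madd b c -> a = b.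
Proof. by move/ffunP=> E; apply/ffunP => i; move: (E i); rewrite !ffunE => /addIn. Qed.

(* [vanish_after j e]: the exponent e only involves the variables x_0, ..., x_j;
   for such e, x^e * x_j is again a standard monomial. *)
Definition vanish_after j e := forall i : 'I_n, (j < i)%N -> e i = 0%N.

Lemma mexp_ind (P : mexp n -> Prop) :
  P (mzero n) -> (forall e j, vanish_after j e -> P e -> P (madd e (eps j))) ->
  forall e, P e.
Proof.
move=> P0 Pstep.
suff H k e : (forall i : 'I_n, (k <= i)%N -> e i = 0%N) -> P e.
  by move=> e; apply: (H n) => i; rewrite leqNgt ltn_ord.
elim: k e => [|k IHk] e ek.
  by have -> : e = mzero n by apply/ffunP => i; rewrite ffunE ek.
have [kn|nk] := ltnP k n; last first.
  by apply: IHk => i ki; have := leq_trans (ltn_ord i) nk; rewrite ltnNge ki.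
pose j := Ordinal kn.
suff Hv v e' : e' j = v -> vanish_after j e' -> P e'
  by apply: (Hv (e j)) => // i; apply: ek.
clear e ek; elim: v e' => [|v IHv] e ej ek.
  apply: IHk => i; rewrite leq_eqVlt => /orP[/eqP ki|]; last exact: ek.
  by rewrite -ej; congr (e _); apply: val_inj; rewrite /= ki.
pose e' := [ffun i => if i == j then v else e i].
have -> : e = madd e' (eps j).
  apply/ffunP => i; rewrite !ffunE; case: eqP => [->|_]; last by rewrite addn0.
  by rewrite ej addn1.
have e'_vanish : vanish_after j e'.
  by move=> i ji; rewrite ffunE ifN ?ek // neq_ltn ji orbT.
by apply: Pstep => //; apply: IHv; rewrite ?ffunE ?eqxx.
Qed.

End Exponents.

Lemma wf_no_descending_chain (T : Type) (r : T -> T -> Prop) :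
  (forall f : nat -> T, ~ (forall k, r (f k.+1) (f k))) -> well_founded r.
Proof.
move=> no_chain a; apply: NNPP => not_acc.
have step b : ~ Acc r b -> {b' | r b' b /\ ~ Acc r b'}.
  move=> nb; apply: constructive_indefinite_description; apply: NNPP => none.
  apply: nb; constructor => b' lb; apply: NNPP => nb'; apply: none; by exists b'.
pose chain (k : nat) : {b | ~ Acc r b} :=
  iter k (fun t => let: exist b' Hb' := step _ (proj2_sig t) in
                   exist _ b' (proj2 Hb')) (exist _ a not_acc).
apply: (no_chain (fun k => proj1_sig (chain k))) => k /=.
by case: (step _ _) => b' [].
Qed.

Lemma tail_argmin (h : nat -> nat) k :
  exists i, (k <= i)%N /\ forall j, (k <= j)%N -> (h i <= h j)%N.
Proof.
suff H v j : (k <= j)%N -> (h j <= v)%N ->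
    exists i, (k <= i)%N /\ forall j, (k <= j)%N -> (h i <= h j)%N.
  exact: (H (h k) k).
elim: v j => [|v IHv] j kj hj.
  by exists j; split=> // j' _; move: hj; rewrite leqn0 => /eqP ->.
have [[j' [kj' hj']]|none] := classic (exists j', (k <= j')%N /\ (h j' < h j)%N).
  by apply: (IHv j') => //; rewrite -ltnS (leq_trans hj').
exists j; split=> // j' kj'; rewrite leqNgt; apply/negP => hj'.
by apply: none; exists j'.
Qed.

Lemma monotone_subseq (h : nat -> nat) : exists psi : nat -> nat,
  (forall t, psi t < psi t.+1)%N /\ (forall t, h (psi t) <= h (psi t.+1))%N.
Proof.
have /all_sig argmin k := constructive_indefinite_description _ (tail_argmin h k).
have [idx idxP] := argmin.
pose start := fix start t := if t is t'.+1 then (idx (start t')).+1 else 0%N.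
exists (fun t => idx (start t)); split=> t /=; first by case: (idxP (idx (start t)).+1).
have [_ min_t] := idxP (start t); apply: min_t.
by apply: leq_trans (proj1 (idxP _)); apply: leq_trans (proj1 (idxP _)) _.
Qed.

Lemma dickson n (f : nat -> mexp n) :
  exists i j, (i < j)%N /\ forall c, (f i c <= f j c)%N.
Proof.
suff H k : exists phi : nat -> nat, (forall t, phi t < phi t.+1)%N /\
    forall t (c : 'I_n), (c < k)%N -> (f (phi t) c <= f (phi t.+1) c)%N.
  have [phi [phi_lt phi_le]] := H n.
  by exists (phi 0%N), (phi 1%N); split=> // c; apply: phi_le.
elim: k => [|k [phi [phi_lt phi_le]]]; first by exists id.
have [kn|nk] := ltnP k n; last first.
  by exists phi; split=> // t c _; apply: phi_le; apply: leq_trans (ltn_ord c) nk.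
pose c0 := Ordinal kn.
have [psi [psi_lt psi_le]] := monotone_subseq (fun t => f (phi t) c0).
have phi_mono : {homo phi : i j / (i < j)%N}.
  by apply: homo_ltn => // ? ? ?; apply: ltn_trans.
have phi_le_far t d (c : 'I_n) : (c < k)%N -> (f (phi t) c <= f (phi (t + d)) c)%N.
  move=> ck; elim: d => [|d IHd]; first by rewrite addn0.
  by apply: leq_trans IHd _; rewrite addnS; apply: phi_le.
exists (phi \o psi); split=> [t|t c]; first exact: phi_mono.
rewrite ltnS leq_eqVlt => /orP[/eqP ck|ck].
  have -> : c = c0 by apply: val_inj.
  exact: psi_le.
by rewrite /= -(subnKC (ltnW (psi_lt t))); apply: phi_le_far.
Qed.

Section Admissible.
Variables (n : nat) (le : rel (mexp n)).
Hypothesis Hle : admissible le.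
Implicit Types a b c d e : mexp n.

Lemma le_refl a : le a a.
Proof. by case: Hle. Qed.
Lemma le_anti a b : le a b -> le b a -> a = b.
Proof. by case: Hle => _ [anti _] ab ba; apply: anti; rewrite ab ba. Qed.
Lemma le_trans a b c : le a b -> le b c -> le a c.
Proof. by case: Hle => _ [_ [trans _]]; apply: trans. Qed.
Lemma le_total a b : le a b || le b a.
Proof. by case: Hle => _ [_ [_ [total _]]]. Qed.
Lemma le0m a : le (mzero n) a.
Proof. by case: Hle => _ [_ [_ [_ [ge0 _]]]]. Qed.
Lemma leD2r a b c : le a b -> le (madd a c) (madd b c).
Proof. by case: Hle => _ [_ [_ [_ [_ leD]]]]; apply: leD. Qed.

Lemma leD a b c d : le a b -> le c d -> le (madd a c) (madd b d).
Proof.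
move=> ab cd; apply: le_trans (leD2r c ab) _.
by rewrite (maddC b c) (maddC b d); apply: leD2r.
Qed.

Definition mlt a b := le a b && (a != b).

Lemma ltD a b c d : mlt a b -> le c d -> mlt (madd a c) (madd b d).
Proof.
move=> /andP[ab nab] cd; rewrite /mlt leD //=; apply: contra nab => /eqP E.
apply/eqP/(@maddI _ c)/le_anti; first exact: leD2r.
by rewrite E (maddC b c) (maddC b d); apply: leD2r.
Qed.

Lemma le_lt_trans a b c : le a b -> mlt b c -> mlt a c.
Proof.
move=> ab /andP[bc nbc]; rewrite /mlt (le_trans ab bc) /=.
by apply: contra nbc => /eqP ac; rewrite -ac in bc *; rewrite (le_anti ab bc).
Qed.

(* An admissible order is a well-order: componentwise divisibility implies
   le, so Dickson's lemma rules out infinite descending chains. *)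
Lemma mlt_wf : well_founded mlt.
Proof.
apply: wf_no_descending_chain => f desc.
have [i [j [ij fij]]] := dickson f.
pose d : mexp n := [ffun c => (f j c - f i c)%N].
have fj : f j = madd d (f i) by apply/ffunP => c; rewrite !ffunE subnK.
have le_ij : le (f i) (f j).
  by rewrite fj -{1}(add0m (f i)); apply: leD2r; apply: le0m.
suff /andP[le_ji] : mlt (f j) (f i) by rewrite (le_anti le_ji le_ij) eqxx.
rewrite -(subnKC ij); elim: (j - i.+1)%N => [|k IHk]; first by rewrite addn0; apply: desc.
by rewrite addnS; apply: le_lt_trans (proj1 (andP (desc _))) IHk.
Qed.

Lemma exists_max (s : seq (mexp n)) : s != [::] ->
  exists2 mx, mx \in s & forall a, a \in s -> le a mx.
Proof.
elim: s => [//|a s IHs] _.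
have [->|/IHs [mx mxs s_le]] := eqVneq s [::].
  exists a => [|b]; first exact: mem_head.
  by rewrite mem_seq1 => /eqP ->; apply: le_refl.
have [a_le|mx_le] := orP (le_total a mx).
  by exists mx; rewrite ?inE ?mxs ?orbT // => b /predU1P[->|/s_le].
exists a; first exact: mem_head.
by move=> b /predU1P[->|/s_le b_le]; [apply: le_refl | apply: le_trans mx_le].
Qed.

End Admissible.

Section Monomials.
Variables (R : nzRingType) (n : nat) (x : 'I_n -> R).
Local Notation m := (monom x).

Lemma monom0 : m (mzero n) = 1.
Proof. by rewrite /monom big1 // => i _; rewrite ffunE expr0. Qed.

Lemma vanish_after_step (j : 'I_n) e :
  vanish_after j e -> vanish_after j (madd e (eps j)).
Proof.
move=> ej i ji; have /negPf ij : i != j by apply: contraTneq ji => ->; rewrite ltnn.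
by rewrite !ffunE ej // ij.
Qed.

(* If e only involves x_0, ..., x_j, the product defining x^e may be cut after
   the j-th factor (indexed by naturals to allow splitting off the last one). *)
Lemma monom_prefix (j : 'I_n) e : vanish_after j e ->
  m e = \prod_(0 <= k < j.+1) x (insubd j k) ^+ e (insubd j k).
Proof.
move=> ej; rewrite /monom.
transitivity (\prod_(0 <= k < n) x (insubd j k) ^+ e (insubd j k)).
  by rewrite big_mkord; apply: eq_bigr => i _; rewrite valKd.
rewrite (big_cat_nat (leq0n j.+1) (ltn_ord j)) /= [X in _ * X]big_nat_cond.
rewrite [X in _ * X]big1 ?mulr1 // => k /andP[/andP[jk kn] _].
by rewrite ej ?expr0 // val_insubd kn.
Qed.

Lemma monom_step (j : 'I_n) e : vanish_after j e ->
  m e * x j = m (madd e (eps j)).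
Proof.
move=> ej; rewrite (monom_prefix ej) (monom_prefix (vanish_after_step ej)).
rewrite !big_nat_recr //= valKd !ffunE eqxx addn1 exprSr mulrA.
congr (_ * _ * _); apply: eq_big_nat => k /andP[_ kj].
have /negPf kj' : insubd j k != j.
  apply/eqP => /(congr1 val); rewrite val_insubd (ltn_trans kj (ltn_ord j)).
  by move=> kj_eq; rewrite kj_eq ltnn in kj.
by rewrite !ffunE kj' addn0.
Qed.

Lemma monom_eps (j : 'I_n) : m (eps j) = x j.
Proof.
by rewrite -(add0m (eps j)) -monom_step ?monom0 ?mul1r // => i _; rewrite ffunE.
Qed.

End Monomials.

Section CollectTerms.
Variables (I : eqType) (D V : zmodType) (G : I -> D -> V).
Hypothesis GD : forall i u v, G i (u + v) = G i u + G i v.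

Lemma collect_terms (ps : seq (I * D)) :
  exists t (C : I -> D), [/\ uniq t, forall i, i \notin t -> C i = 0 &
    \sum_(p <- ps) G p.1 p.2 = \sum_(i <- t) G i (C i)].
Proof.
elim: ps => [|[i0 d0] ps [t [C [ut Ct IHps]]]].
  by exists [::], (fun _ => 0); rewrite !big_nil.
rewrite big_cons IHps /=; have [i0t|i0t] := boolP (i0 \in t).
  exists t, (fun i => if i == i0 then C i + d0 else C i); split=> //.
    by move=> i it; case: eqP => [ii0|_]; [rewrite ii0 i0t in it | apply: Ct].
  rewrite !(bigD1_seq _ i0t ut) /= eqxx GD addrCA addrA; congr (_ + _).
  by apply: eq_bigr => i /negPf ->.
exists (i0 :: t), (fun i => if i == i0 then d0 else C i); split.
- by rewrite /= i0t.
- by move=> i; rewrite inE negb_or => /andP[/negPf -> /Ct].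
- rewrite big_cons eqxx; congr (_ + _); apply: eq_big_seq => i it.
  by rewrite ifN //; apply: contraNneq i0t => <-.
Qed.

End CollectTerms.

Lemma big_uniq_widen (I : eqType) (V : nmodType) (s t : seq I) (F : I -> V) :
  uniq s -> uniq t -> {subset s <= t} -> (forall i, i \notin s -> F i = 0) ->
  \sum_(i <- s) F i = \sum_(i <- t) F i.
Proof.
move=> us ut st F0.
rewrite [RHS](eq_bigr (fun i => if i \in s then F i else 0)); last first.
  by move=> i _; case: ifPn => // /F0.
rewrite -big_mkcond -big_filter; apply: perm_big.
apply: uniq_perm => //; first exact: filter_uniq.
by move=> i; rewrite mem_filter; case: (boolP (i \in s)) => //= /st ->.
Qed.

Section LeftPolynomial.
Variables (D : unitRingType) (R : nzRingType) (iota : {rmorphism D -> R}).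
Variables (n : nat) (x : 'I_n -> R).
Hypothesis Hlp : left_polynomial iota x.
Local Notation m := (monom x).
Implicit Types (f g : R) (a b e : mexp n).

Definition left_expansion f (s : seq (mexp n)) (F : mexp n -> D) :=
  [/\ uniq s, forall a, a \notin s -> F a = 0 & f = \sum_(a <- s) iota (F a) * m a].

Lemma left_expansion_exists f : exists s F, left_expansion f s F.
Proof.
have [/(_ f) [s [c ->]] _] := Hlp.
have GD a u v : iota (u + v) * m a = iota u * m a + iota v * m a.
  by rewrite rmorphD mulrDl.
have [t [C [ut Ct E]]] := collect_terms (G := fun a d => iota d * m a) GD
  [seq (a, c a) | a <- s].
by exists t, C; split=> //; rewrite -E big_map.
Qed.

Lemma left_expansion_unique f s t F G :
  left_expansion f s F -> left_expansion f t G -> F =1 G.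
Proof.
move=> [us Fs fF] [ut Gt fG] a.
pose u := undup (s ++ t).
have uu : uniq u by apply: undup_uniq.
have su : {subset s <= u} by move=> b bs; rewrite mem_undup mem_cat bs.
have tu : {subset t <= u} by move=> b bt; rewrite mem_undup mem_cat bt orbT.
have widen w H : uniq w -> {subset w <= u} -> (forall b, b \notin w -> H b = 0) ->
    \sum_(b <- w) iota (H b) * m b = \sum_(b <- u) iota (H b) * m b.
  by move=> uw wu Hw; apply: big_uniq_widen => // b /Hw ->; rewrite rmorph0 mul0r.
have diff0 : \sum_(b <- u) iota (F b - G b) * m b = 0.
  under eq_bigr do rewrite rmorphB mulrBl.
  by rewrite sumrB -(widen s F) // -(widen t G) // -fF -fG subrr.
have [au|] := boolP (a \in u).
  by apply/eqP; rewrite -subr_eq0 (Hlp.2 _ _ uu diff0).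
by rewrite mem_undup mem_cat negb_or => /andP[/Fs -> /Gt ->].
Qed.

Definition lcoord f : mexp n -> D :=
  epsilon (inhabits (fun _ => 0)) (fun F => exists s, left_expansion f s F).

Lemma lcoord_expansion f : exists s, left_expansion f s (lcoord f).
Proof.
have [s [F fF]] := left_expansion_exists f.
exact: (epsilon_spec _ (fun F => exists s, left_expansion f s F)
  (ex_intro _ F (ex_intro _ s fF))).
Qed.

Lemma lcoordE f s F : left_expansion f s F -> lcoord f =1 F.
Proof.
by move=> fF; have [t ft] := lcoord_expansion f; apply: left_expansion_unique ft fF.
Qed.

Lemma lcoord0 a : lcoord 0 a = 0.
Proof. by rewrite (@lcoordE 0 [::] (fun _ => 0)) //; split; rewrite ?big_nil. Qed.

Lemma lcoordD f g a : lcoord (f + g) a = lcoord f a + lcoord g a.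
Proof.
have [s [us Fs fF]] := lcoord_expansion f; have [t [ut Gt gG]] := lcoord_expansion g.
pose u := undup (s ++ t).
have su : {subset s <= u} by move=> b bs; rewrite mem_undup mem_cat bs.
have tu : {subset t <= u} by move=> b bt; rewrite mem_undup mem_cat bt orbT.
apply: (@lcoordE _ u (fun b => lcoord f b + lcoord g b)); split.
- exact: undup_uniq.
- by move=> b; rewrite mem_undup mem_cat negb_or => /andP[/Fs -> /Gt ->]; rewrite addr0.
under eq_bigr do rewrite rmorphD mulrDl.
rewrite big_split /= {1}fF {1}gG.
congr (_ + _); apply: big_uniq_widen; rewrite ?undup_uniq // => b.
  by move/Fs ->; rewrite rmorph0 mul0r.
by move/Gt ->; rewrite rmorph0 mul0r.
Qed.

Lemma lcoordZ d f a : lcoord (iota d * f) a = d * lcoord f a.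
Proof.
have [s [us Fs fF]] := lcoord_expansion f.
apply: (@lcoordE _ s (fun b => d * lcoord f b)); split=> // [b /Fs ->|].
  by rewrite mulr0.
by rewrite {1}fF mulr_sumr; apply: eq_bigr => b _; rewrite rmorphM mulrA.
Qed.

Lemma lcoordB f g a : lcoord (f - g) a = lcoord f a - lcoord g a.
Proof. by rewrite lcoordD -mulN1r -(rmorphN1 iota) lcoordZ mulN1r. Qed.

Lemma lcoord_sum (I : Type) (r : seq I) (F : I -> R) a :
  lcoord (\sum_(i <- r) F i) a = \sum_(i <- r) lcoord (F i) a.
Proof.
by elim: r => [|i r IHr]; rewrite !(big_nil, big_cons) ?lcoord0 ?lcoordD ?IHr.
Qed.

Lemma lcoord_term d b a : lcoord (iota d * m b) a = if a == b then d else 0.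
Proof.
apply: (@lcoordE _ [:: b] (fun a => if a == b then d else 0)).
by split=> [//|c|]; rewrite ?big_seq1 ?eqxx // mem_seq1 => /negPf ->.
Qed.

Lemma lcoord_monom b a : lcoord (m b) a = if a == b then 1 else 0.
Proof. by rewrite -[m b]mul1r -(rmorph1 iota) lcoord_term. Qed.

Lemma lcoord_iota d a : lcoord (iota d) a = if a == mzero n then d else 0.
Proof. by rewrite -[iota d]mulr1 -(monom0 x) lcoord_term. Qed.

Lemma std_left_support f : exists s, std_left iota x f s (lcoord f) /\
  forall a, (a \in s) = (lcoord f a != 0).
Proof.
have [s [us Fs fF]] := lcoord_expansion f.
exists [seq a <- s | lcoord f a != 0]; split; last first.
  move=> a; rewrite mem_filter andb_idr // => fa.
  by apply: contraTT fa => /Fs ->; rewrite eqxx.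
split; [exact: filter_uniq | by move=> a; rewrite mem_filter => /andP[] |].
rewrite big_filter big_mkcond /= {1}fF; apply: eq_bigr => a _.
by case: ifPn => // /negPn /eqP ->; rewrite rmorph0 mul0r.
Qed.

Lemma std_left_lcoord f s c : std_left iota x f s c ->
  forall a, lcoord f a = if a \in s then c a else 0.
Proof.
move=> [us cs fc]; apply: (@lcoordE _ s); split=> // [a /negPf -> //|].
by rewrite {1}fc; apply: eq_big_seq => a ->.
Qed.

Lemma lcoefE f e d : lcoef iota x f e d <-> lcoord f e = d.
Proof.
split=> [[s [c [st eH]]]|<-].
  by rewrite (std_left_lcoord st); case: eH => [[-> ->]|[/negPf -> ->]].
have [s [st sE]] := std_left_support f; exists s, (lcoord f); split=> //.
by have [es|es] := boolP (e \in s); [left | right; move: es; rewrite sE negbK => /eqP].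
Qed.

Section LeftPBW.
Variable le : rel (mexp n).
Hypothesis Hle : admissible le.
Hypothesis Hexp : forall f g ef eg, is_exp iota x le f ef -> is_exp iota x le g eg ->
  is_exp iota x le (f * g) (madd ef eg).
Local Notation lt := (mlt le).

Definition exp_le f e := forall a, lcoord f a != 0 -> le a e.
Definition exp_lt f e := forall a, lcoord f a != 0 -> lt a e.
Definition has_exp f e := lcoord f e != 0 /\ exp_le f e.

Lemma has_expE f e : is_exp iota x le f e <-> has_exp f e.
Proof.
split=> [[s [c [st es s_le]]]|[fe f_le]].
  have fE := std_left_lcoord st.
  split=> [|a]; first by rewrite fE es; case: st => _ ->.
  by rewrite fE; case: ifP => [/s_le //|]; rewrite eqxx.
have [s [st sE]] := std_left_support f.
by exists s, (lcoord f); split; rewrite // ?sE // => a; rewrite sE; apply: f_le.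
Qed.

Lemma has_expM f g ef eg : has_exp f ef -> has_exp g eg -> has_exp (f * g) (madd ef eg).
Proof. by move=> /has_expE fe /has_expE ge; apply/has_expE/Hexp. Qed.

Lemma has_exp_uniq f e e' : has_exp f e -> has_exp f e' -> e = e'.
Proof.
by move=> [fe f_le] [fe' f_le']; apply: (le_anti Hle); [apply: f_le' | apply: f_le].
Qed.

Lemma has_exp_neq0 f e : has_exp f e -> f != 0.
Proof. by move=> [fe _]; apply: contraNneq fe => ->; rewrite lcoord0. Qed.

Lemma has_exp_exists f : f != 0 -> exists e, has_exp f e.
Proof.
move=> f0; have [s [st sE]] := std_left_support f.
have s0 : s != [::] by apply: contraNneq f0 => s0; case: st => _ _ ->; rewrite s0 big_nil.
have [mx mxs s_le] := exists_max Hle s0.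
by exists mx; split=> [|a]; rewrite -?sE // => /s_le.
Qed.

Lemma exp_le_cases f e : exp_le f e -> f = 0 \/ exists2 e', has_exp f e' & le e' e.
Proof.
move=> f_le; have [->|f0] := eqVneq f 0; [by left | right].
by have [e' [fe' f_le']] := has_exp_exists f0; exists e' => //; apply: f_le.
Qed.

Lemma exp_lt_cases f e : exp_lt f e -> f = 0 \/ exists2 e', has_exp f e' & lt e' e.
Proof.
move=> f_lt; have [->|f0] := eqVneq f 0; [by left | right].
by have [e' [fe' f_le']] := has_exp_exists f0; exists e' => //; apply: f_lt.
Qed.

Lemma exp_le0 e : exp_le 0 e.
Proof. by move=> a; rewrite lcoord0 eqxx. Qed.

Lemma exp_lt0 e : exp_lt 0 e.
Proof. by move=> a; rewrite lcoord0 eqxx. Qed.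

Lemma exp_lt_lcoord f e : exp_lt f e -> lcoord f e = 0.
Proof. by move=> f_lt; apply/eqP; apply: contraT => /f_lt; rewrite /mlt eqxx andbF. Qed.

Lemma exp_leM f g ef eg : exp_le f ef -> exp_le g eg -> exp_le (f * g) (madd ef eg).
Proof.
move=> /exp_le_cases [->|[ef' fe' ef_le]]; first by rewrite mul0r => _; apply: exp_le0.
move=> /exp_le_cases [->|[eg' ge' eg_le]]; first by rewrite mulr0; apply: exp_le0.
move=> a /(proj2 (has_expM fe' ge')) a_le.
exact: (le_trans Hle a_le (leD Hle ef_le eg_le)).
Qed.

Lemma exp_ltM f g ef eg : exp_lt f ef -> exp_le g eg -> exp_lt (f * g) (madd ef eg).
Proof.
move=> /exp_lt_cases [->|[ef' fe' ef_lt]]; first by rewrite mul0r => _; apply: exp_lt0.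
move=> /exp_le_cases [->|[eg' ge' eg_le]]; first by rewrite mulr0; apply: exp_lt0.
move=> a /(proj2 (has_expM fe' ge')) a_le.
exact: (le_lt_trans Hle a_le (ltD Hle ef_lt eg_le)).
Qed.

Lemma exp_leMlt f g ef eg : exp_le f ef -> exp_lt g eg -> exp_lt (f * g) (madd ef eg).
Proof.
move=> /exp_le_cases [->|[ef' fe' ef_le]]; first by rewrite mul0r => _; apply: exp_lt0.
move=> /exp_lt_cases [->|[eg' ge' eg_lt]]; first by rewrite mulr0; apply: exp_lt0.
move=> a /(proj2 (has_expM fe' ge')) a_le; apply: (le_lt_trans Hle a_le).
by rewrite maddC (maddC ef); apply: ltD.
Qed.

Lemma has_exp_monom a : has_exp (m a) a.
Proof.
split=> [|b]; first by rewrite lcoord_monom eqxx oner_neq0.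
by rewrite lcoord_monom; case: (eqVneq b a) => [-> _|_]; rewrite ?eqxx ?(le_refl Hle).
Qed.

Lemma has_exp_x j : has_exp (x j) (eps j).
Proof. by rewrite -monom_eps; apply: has_exp_monom. Qed.

Lemma exp_le_iota d : exp_le (iota d) (mzero n).
Proof.
move=> b; rewrite lcoord_iota.
by case: (eqVneq b (mzero n)) => [-> _|_]; rewrite ?eqxx ?(le_refl Hle).
Qed.

Lemma has_exp_iota d : d != 0 -> has_exp (iota d) (mzero n).
Proof. by move=> d0; split; [rewrite lcoord_iota eqxx | apply: exp_le_iota]. Qed.

Lemma has_exp_rterm a d : d != 0 -> has_exp (m a * iota d) a.
Proof.
move=> d0; rewrite -[X in has_exp _ X]madd0.
exact: has_expM (has_exp_monom a) (has_exp_iota d0).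
Qed.

Lemma exp_le_rterm a d : exp_le (m a * iota d) a.
Proof.
rewrite -[X in exp_le _ X]madd0.
exact: exp_leM (proj2 (has_exp_monom a)) (exp_le_iota (d := d)).
Qed.

Lemma has_exp_sum (t : seq (mexp n)) (F : mexp n -> R) mx : uniq t ->
  (forall a, a \in t -> has_exp (F a) a) -> mx \in t -> (forall a, a \in t -> le a mx) ->
  has_exp (\sum_(a <- t) F a) mx /\ lcoord (\sum_(a <- t) F a) mx = lcoord (F mx) mx.
Proof.
move=> ut Fexp mxt t_le.
have top : lcoord (\sum_(a <- t) F a) mx = lcoord (F mx) mx.
  rewrite lcoord_sum (bigD1_seq _ mxt ut) /= big1_seq ?addr0 // => a /andP[amx at'].
  apply: contraNeq amx => /(proj2 (Fexp a at')) a_le.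
  by apply/eqP/(le_anti Hle) => //; apply: t_le.
split=> //; split=> [|b]; first by rewrite top; case: (Fexp mx mxt).
rewrite lcoord_sum => sum_b.
have [a at' Fab] : exists2 a, a \in t & lcoord (F a) b != 0.
  apply/hasP; apply: contraNT sum_b => /hasPn Fb.
  by rewrite big1_seq // => a /andP[_ /Fb]; rewrite negbK => /eqP.
exact: (le_trans Hle (proj2 (Fexp a at') b Fab) (t_le a at')).
Qed.

Lemma has_exp_rsum (s : seq (mexp n)) (C : mexp n -> D) : uniq s -> s != [::] ->
  (forall a, a \in s -> C a != 0) ->
  exists2 mx, has_exp (\sum_(a <- s) m a * iota (C a)) mx &
    lcoord (\sum_(a <- s) m a * iota (C a)) mx = lcoord (m mx * iota (C mx)) mx.
Proof.
move=> us s0 C0; have [mx mxs s_le] := exists_max Hle s0.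
have rterm_exp a : a \in s -> has_exp (m a * iota (C a)) a.
  by move/C0; apply: has_exp_rterm.
by have [sum_exp sum_top] := has_exp_sum us rterm_exp mxs s_le; exists mx.
Qed.

Lemma rsum_support (s : seq (mexp n)) (C : mexp n -> D) :
  \sum_(a <- s) m a * iota (C a) = \sum_(a <- [seq a <- s | C a != 0]) m a * iota (C a).
Proof.
rewrite big_filter [RHS]big_mkcond; apply: eq_bigr => a _.
by case: ifPn => // /negPn /eqP ->; rewrite rmorph0 mulr0.
Qed.

(* The standard monomials are always right linearly independent in a left PBW
   ring: a nontrivial right combination has an exponent, hence is nonzero. *)
Lemma right_independent (s : seq (mexp n)) (c : mexp n -> D) : uniq s ->
  \sum_(a <- s) m a * iota (c a) = 0 -> forall a, a \in s -> c a = 0.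
Proof.
move=> us sum0 a0 a0s; apply: contra_eq sum0 => ca0.
pose t := [seq a <- s | c a != 0].
have a0t : a0 \in t by rewrite mem_filter ca0.
have t0 : t != [::] by apply/eqP => t0; rewrite t0 in a0t.
have t_c0 a : a \in t -> c a != 0 by rewrite mem_filter => /andP[].
have [mx sum_exp _] := has_exp_rsum (filter_uniq _ us) t0 t_c0.
by rewrite (rsum_support s c); apply: has_exp_neq0 sum_exp.
Qed.

Lemma exp_lt_sub f g e : exp_le f e -> exp_le g e -> lcoord f e = lcoord g e ->
  exp_lt (f - g) e.
Proof.
move=> f_le g_le fg b; rewrite lcoordB.
have [->|be] := eqVneq b e; first by rewrite fg subrr eqxx.
move=> fg_b; rewrite /mlt be andbT.
have [fb0|fb] := eqVneq (lcoord f b) 0; last exact: f_le.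
by apply: g_le; move: fg_b; rewrite fb0 sub0r oppr_eq0.
Qed.

Lemma exp_le_lterm d a : exp_le (iota d * m a) a.
Proof.
rewrite -[X in exp_le _ X]add0m.
exact: exp_leM (exp_le_iota (d := d)) (proj2 (has_exp_monom a)).
Qed.

(* The twist sigma_j = (-)^{eps_j}: x_j c = sigma_j(c) x_j + (terms below eps_j). *)
Definition twist (j : 'I_n) (c : D) := lcoord (x j * iota c) (eps j).

Lemma twist_rest j c : exp_lt (x j * iota c - iota (twist j c) * x j) (eps j).
Proof.
rewrite -(monom_eps x); apply: exp_lt_sub (exp_le_rterm (a := eps j) (d := c))
  (exp_le_lterm (d := twist j c) (a := eps j)) _.
by rewrite lcoord_term eqxx /twist monom_eps.
Qed.

Lemma twist0 j : twist j 0 = 0.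
Proof. by rewrite /twist rmorph0 mulr0 lcoord0. Qed.

Lemma twistD j c d : twist j (c + d) = twist j c + twist j d.
Proof. by rewrite /twist rmorphD mulrDr lcoordD. Qed.

Lemma twistB j c d : twist j (c - d) = twist j c - twist j d.
Proof. by rewrite /twist rmorphB mulrBr lcoordB. Qed.

Lemma twist1 j : twist j 1 = 1.
Proof. by rewrite /twist rmorph1 mulr1 -(monom_eps x) lcoord_monom eqxx. Qed.

(* Multiplicativity: x_j c d = (sigma_j(c) x_j + rest) d, and rest * d stays
   below eps_j, so only sigma_j(c) (x_j d) contributes at eps_j. *)
Lemma twistM j c d : twist j (c * d) = twist j c * twist j d.
Proof.
rewrite {1}/twist rmorphM mulrA -(subrK (iota (twist j c) * x j) (x j * iota c)).
rewrite mulrDl lcoordD -mulrA lcoordZ (exp_lt_lcoord (f := _ * iota d)) ?add0r //.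
rewrite -[eps j]madd0.
exact: exp_ltM (twist_rest (j := j) (c := c)) (exp_le_iota (d := d)).
Qed.

Lemma twist_neq0 j c : c != 0 -> twist j c != 0.
Proof. by move=> c0; have [] := has_exp_rterm (eps j) c0; rewrite monom_eps. Qed.

Lemma twist_inj j : injective (twist j).
Proof.
move=> c d cd; apply/eqP; rewrite -subr_eq0; apply/negPn/negP => /(@twist_neq0 j).
by rewrite twistB cd subrr eqxx.
Qed.

Definition twist_rmorphism (j : 'I_n) : {rmorphism D -> D} :=
  HB.pack (twist j) (GRing.isNmodMorphism.Build _ _ (twist j) (twist0 j, twistD j))
                    (GRing.isMonoidMorphism.Build _ _ (twist j) (twist1 j, twistM j)).

Definition top_coef e (c : D) := lcoord (m e * iota c) e.

Lemma lcoord_mulx h e j : vanish_after j e -> exp_le h e ->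
  lcoord (h * x j) (madd e (eps j)) = lcoord h e.
Proof.
move=> ej h_le; set r := h - iota (lcoord h e) * m e.
have r_lt : exp_lt r e.
  apply: exp_lt_sub h_le (exp_le_lterm (d := lcoord h e) (a := e)) _.
  by rewrite lcoord_term eqxx.
rewrite -{1}(subrK (iota (lcoord h e) * m e) h) -/r mulrDl lcoordD -mulrA monom_step //.
rewrite lcoord_term eqxx (exp_lt_lcoord (f := r * x j)) ?add0r //.
exact: exp_ltM r_lt (proj2 (has_exp_x j)).
Qed.

Lemma top_coef_step e j c : vanish_after j e ->
  top_coef (madd e (eps j)) c = top_coef e (twist j c).
Proof.
move=> ej; rewrite /top_coef -monom_step // -mulrA.
rewrite -(subrK (iota (twist j c) * x j) (x j * iota c)) mulrDr lcoordD.
rewrite (exp_lt_lcoord (f := m e * _)) ?add0r; last first.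
  exact: exp_leMlt (proj2 (has_exp_monom e)) (twist_rest (j := j) (c := c)).
by rewrite mulrA lcoord_mulx //; apply: exp_le_rterm.
Qed.

(* If all twists are onto, every coefficient is the top coefficient of some
   right term x^e c: build e variable by variable (mexp_ind). *)
Lemma top_coef_surj : (forall j d, exists c, twist j c = d) ->
  forall e d, exists c, top_coef e c = d.
Proof.
move=> twist_surj; elim/mexp_ind => [d|e j ej IHe d].
  by exists d; rewrite /top_coef monom0 mul1r lcoord_iota eqxx.
have [c' ec'] := IHe d; have [c tc] := twist_surj j c'.
by exists c; rewrite top_coef_step // tc.
Qed.

Lemma rsum_normalize (ps : seq (mexp n * D)) : exists t (C : mexp n -> D),
  [/\ uniq t, forall a, a \in t -> C a != 0 &
      \sum_(p <- ps) m p.1 * iota p.2 = \sum_(a <- t) m a * iota (C a)].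
Proof.
have GD a u v : m a * iota (u + v) = m a * iota u + m a * iota v.
  by rewrite rmorphD mulrDr.
have [t [C [ut _ ->]]] := collect_terms (G := fun a d => m a * iota d) GD ps.
exists [seq a <- t | C a != 0], C; split; rewrite -?rsum_support ?filter_uniq //.
by move=> a; rewrite mem_filter => /andP[].
Qed.

Definition rspan f := exists ps : seq (mexp n * D), f = \sum_(p <- ps) m p.1 * iota p.2.

(* If every coefficient is a top coefficient, the x^a span R on the right:
   subtract the right term matching the top coordinate and recurse on the
   well-founded order. *)
Lemma rspan_all : (forall e d, exists c, top_coef e c = d) -> forall f, rspan f.
Proof.
move=> top_surj.
suff rspan_le e f : exp_le f e -> rspan f.
  move=> f; have [->|/has_exp_exists [e [_ f_le]]] := eqVneq f 0.
    by exists [::]; rewrite big_nil.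
  exact: rspan_le f_le.
elim/(well_founded_ind (mlt_wf Hle)): e f => e IHe f f_le.
have [c top_c] := top_surj e (lcoord f e).
have g_lt : exp_lt (f - m e * iota c) e.
  exact: exp_lt_sub f_le (exp_le_rterm (a := e) (d := c)) (esym top_c).
have [ps g_ps] : rspan (f - m e * iota c).
  have [->|[e' [_ g_le] e'_lt]] := exp_lt_cases g_lt.
    by exists [::]; rewrite big_nil.
  exact: IHe e' e'_lt _ g_le.
by exists ((e, c) :: ps); rewrite big_cons -g_ps addrC subrK.
Qed.

Lemma right_spanning : (forall j d, exists c, twist j c = d) ->
  forall f, exists s (c : mexp n -> D), f = \sum_(a <- s) m a * iota (c a).
Proof.
move=> twist_surj f; have [ps ->] := rspan_all (top_coef_surj twist_surj) f.
by have [t [C [_ _ ->]]] := rsum_normalize ps; exists t, C.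
Qed.

(* Direction (=>): if the x^a span R on the right, expanding d x_j on the right
   and comparing exponents shows that d = sigma_j(c) for some c. *)
Lemma twist_surjective :
  (forall f, exists s (c : mexp n -> D), f = \sum_(a <- s) m a * iota (c a)) ->
  forall j d, exists c, twist j c = d.
Proof.
move=> rspanning j d; have [->|d0] := eqVneq d 0; first by exists 0; rewrite twist0.
set f := iota d * x j.
have f_exp : has_exp f (eps j).
  by rewrite -[eps j]add0m; apply: has_expM (has_exp_iota d0) (has_exp_x j).
have f_top : lcoord f (eps j) = d by rewrite /f -(monom_eps x) lcoord_term eqxx.
have [s [c f_s]] := rspanning f.
have [t [C [ut C0 f_t]]] := rsum_normalize [seq (a, c a) | a <- s].
rewrite big_map -f_s in f_t.
have t0 : t != [::].
  by apply/eqP => t_nil; move: (has_exp_neq0 f_exp); rewrite f_t t_nil big_nil eqxx.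
have [mx] := has_exp_rsum ut t0 C0; rewrite -f_t => mx_exp mx_top.
have mx_j := has_exp_uniq mx_exp f_exp; subst mx.
by exists (C (eps j)); rewrite /twist -(monom_eps x) -mx_top f_top.
Qed.

End LeftPBW.
End LeftPolynomial.

Lemma inj_surj_bijective (A B : Type) (f : A -> B) :
  injective f -> (forall b, exists a, f a = b) -> bijective f.
Proof.
move=> f_inj f_surj.
pose g b := proj1_sig (constructive_indefinite_description _ (f_surj b)).
have gK b : f (g b) = b by rewrite /g; case: constructive_indefinite_description.
by exists g => // a; apply: f_inj; rewrite gK.
Qed.

Theorem mainTheorem12 (D : unitRingType) (R : nzRingType)
  (iota : {rmorphism D -> R}) (n : nat) (x : 'I_n -> R) (le : rel (mexp n))
  (HD : forall a : D, a != 0 -> a \is a GRing.unit)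
  (Hle : admissible le)
  (HR : left_PBW iota x le) :
  right_polynomial iota x <->
  (forall i : 'I_n, exists sigma : {rmorphism D -> D},
      bijective sigma /\
      (forall a : D, lcoef iota x (x i * iota a) (eps i) (sigma a))).
Proof.
have [Hlp Hexp] := HR.
split=> [[rspanning _] i | twists].
  exists (twist_rmorphism Hlp Hle Hexp i); split=> [|a]; last exact/(lcoefE Hlp).
  exact: inj_surj_bijective (twist_inj Hlp Hle Hexp (j := i))
    (twist_surjective Hlp Hle Hexp rspanning i).
have twist_surj j d : exists c, twist iota x j c = d.
  have [sigma [[sigma_inv _ sigma_invK] sigmaE]] := twists j.
  by exists (sigma_inv d); rewrite -[RHS]sigma_invK; apply/(lcoefE Hlp).
split; first exact: (right_spanning Hlp Hle Hexp twist_surj).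
exact: (right_independent Hlp Hle Hexp).
Qed.
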